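(* In the unit-cost arithmetic model, given integers $n\ge1$, $k\ge0$ and $0\le i<\binom{n-1+k}{k}$, the multiset of rank $i$ among all multisets of $k$ elements from $\{0,\dots,n-1\}$ (ordered lexicographically by their non-increasing element sequences, zero-based ranks) can be computed in $O(k^2\log n)$ time.
   Context: Each multiset is represented by the sequence of its elements in non-increasing order; multisets are ordered lexicographically by these sequences, and ranks start at $0$. Arithmetic operations on integers are assumed to take constant time. *)

From mathcomp Require Import all_boot.
Set Implicit Arguments. Unset Strict Implicit. Unset Printing Implicit Defensive.

(* A k-multiset over {0,...,n-1} is represented by the sequence of its
   elements in non-increasing order. *)
Definition is_mset (n k : nat) (s : seq nat) : bool :=
  [&& size s == k, sorted geq s & all (fun x => x < n) s].

Fixpoint ltlex (s t : seq nat) : bool :=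
  match s, t with
  | x :: s', y :: t' => (x < y) || ((x == y) && ltlex s' t')
  | [::], _ :: _ => true
  | _, _ => false
  end.

Definition mset_of_rank (n k i : nat) (s : seq nat) : Prop :=
  is_mset n k s /\
  #|[set t : k.-tuple 'I_n | is_mset n k (map val t) && ltlex (map val t) s]| = i.

(* Registers/memory cells hold unbounded naturals; every instruction,
   including each arithmetic operation, costs one step. *)
Inductive instr : Type :=
| IConst (d c : nat)
| IAdd (d a b : nat)
| ISub (d a b : nat)
| IMul (d a b : nat)
| IDiv (d a b : nat)
| IMod (d a b : nat)
| ILoad (d a : nat)
| IStore (a s : nat)
| IJlt (a b t : nat)
| IJeq (a b t : nat)
| IJmp (t : nat)
| IHalt.

Definition mem := nat -> nat.
Definition config := (nat * mem)%type.

Definition upd (m : mem) (a v : nat) : mem := fun x => if x == a then v else m x.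

Definition fetch (P : seq instr) (pc : nat) : instr := nth IHalt P pc.

Definition step (P : seq instr) (c : config) : config :=
  let: (pc, m) := c in
  match fetch P pc with
  | IConst d v => (pc.+1, upd m d v)
  | IAdd d a b => (pc.+1, upd m d (m a + m b))
  | ISub d a b => (pc.+1, upd m d (m a - m b))
  | IMul d a b => (pc.+1, upd m d (m a * m b))
  | IDiv d a b => (pc.+1, upd m d (m a %/ m b))
  | IMod d a b => (pc.+1, upd m d (m a %% m b))
  | ILoad d a => (pc.+1, upd m d (m (m a)))
  | IStore a s => (pc.+1, upd m (m a) (m s))
  | IJlt a b t => (if m a < m b then t else pc.+1, m)
  | IJeq a b t => (if m a == m b then t else pc.+1, m)
  | IJmp t => (t, m)
  | IHalt => (pc, m)
  end.

Definition halted (P : seq instr) (c : config) : bool :=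
  if fetch P c.1 is IHalt then true else false.

Definition run (P : seq instr) (t : nat) (c : config) : config :=
  iter t (step P) c.

Definition init (n k i : nat) : config :=
  (0, fun x => if x == 0 then n else if x == 1 then k else if x == 2 then i else 0).

Definition output (k : nat) (c : config) : seq nat :=
  [seq c.2 (3 + j) | j <- iota 0 k].

From Pilot Require Import Defs.
From mathcomp Require Import all_boot zify.

Set Implicit Arguments.
Unset Strict Implicit.
Unset Printing Implicit Defensive.

(* Among the non-increasing sequences of length m over {0..u-1}, the ones
   below x :: s are the nmsets x m = 'C(x + m - 1, m) sequences over
   {0..x-1}, followed by those x :: t with t below s; so the rank is
   sum_j nmsets x_j (m - j).  Unranking is greedy: the leading element is the
   largest x < u with nmsets x m <= r.  A binary search over [0, u) finds it
   with O(log n) probes, and each probe computes nmsets x m by m exact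
   multiply-then-divide steps, since 'C(a + 1, j + 1) = 'C(a, j) (a + 1) /
   (j + 1).  Summed over the k elements this costs O(k^2 log n) steps. *)

Definition nmsets (u m : nat) : nat := 'C(u + m - 1, m).

Fixpoint mset_rank (s : seq nat) : nat :=
  if s is x :: s' then nmsets x (size s) + mset_rank s' else 0.

Fixpoint enum_msets (u m : nat) : seq (seq nat) :=
  if m is m'.+1 then
    flatten [seq [seq x :: t | t <- enum_msets x.+1 m'] | x <- iota 0 u]
  else [:: [::]].

Lemma nmsets0 u : nmsets u 0 = 1.
Proof. by rewrite /nmsets bin0. Qed.

Lemma nmsets0n m : nmsets 0 m = (m == 0).
Proof. by case: m => [|m]; rewrite ?nmsets0 // /nmsets bin_small //; lia. Qed.

Lemma nmsetsS u m : nmsets u.+1 m.+1 = nmsets u m.+1 + nmsets u.+1 m.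
Proof.
rewrite /nmsets (_ : u.+1 + m.+1 - 1 = (u + m).+1) ?binS; last by lia.
by congr (binomial _ _ + binomial _ _); lia.
Qed.

Lemma nmsetsS_div u m : nmsets u m.+1 = nmsets u m * (u + m) %/ m.+1.
Proof.
rewrite /nmsets (_ : u + m.+1 - 1 = u + m); last by lia.
have := mul_bin_diag (u + m) m; rewrite (_ : (u + m).-1 = u + m - 1); last by lia.
by rewrite mulnC => ->; rewrite mulKn.
Qed.

Lemma is_mset_cons u m x t :
  is_mset u m.+1 (x :: t) = (x < u) && is_mset x.+1 m t.
Proof.
rewrite /is_mset /= eqSS (path_sortedE (rev_trans leq_trans)).
case: (ltnP x u) => xu /=; last by rewrite !andbF.
apply/and3P/and3P => [[-> /andP[tx ->] _]|[-> -> tx]]; split=> //.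
  by rewrite andbT.
by apply: sub_all tx => y /=; lia.
Qed.

Lemma mem_enum_msets u m s : (s \in enum_msets u m) = is_mset u m s.
Proof.
elim: m u s => [|m IH] u [|x t] //=.
  by apply/negbTE/flatten_mapP => -[y _ /mapP[z]].
rewrite is_mset_cons -IH; apply/flatten_mapP/andP => [[y]|[xu tP]].
  by rewrite mem_iota => yu /mapP[z zP [-> ->]].
by exists x; rewrite ?mem_iota ?map_f.
Qed.

Lemma uniq_enum_msets u m : uniq (enum_msets u m).
Proof.
elim: m u => [|m IH] u //=; elim: u 0 => [|u IHu] a //=.
rewrite cat_uniq IHu andbT map_inj_uniq ?IH; last by move=> ? ? [].
apply/hasPn => s /flatten_mapP[y]; rewrite mem_iota => ay /mapP[t _ ->].
by apply/mapP => -[w _ [ya _]]; lia.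
Qed.

Lemma size_enum_msets u m : size (enum_msets u m) = nmsets u m.
Proof.
elim: m u => [|m IH] u; first by rewrite nmsets0.
rewrite /= size_flatten /shape -map_comp.
elim: u => [|u IHu]; first by rewrite nmsets0n.
by rewrite -addn1 iotaD map_cat sumn_cat IHu /= size_map IH addn0 addn1 nmsetsS.
Qed.

Lemma count_ltlex_enum_msets u m s : is_mset u m s ->
  count (ltlex^~ s) (enum_msets u m) = mset_rank s.
Proof.
elim: m u s => [|m IH] u [|x s] //=.
rewrite is_mset_cons => /andP[xu sP].
have -> : iota 0 u = iota 0 x ++ x :: iota x.+1 (u - x.+1).
  by rewrite {1}(_ : u = x + (u - x.+1).+1) ?iotaD //; lia.
rewrite count_flatten -map_comp map_cat sumn_cat /= count_map.
rewrite [sumn (map _ (iota x.+1 _))](_ : _ = 0); last first.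
  rewrite (eq_in_map _ (fun=> 0) _).1 => [|y]; first by elim: (iota _ _).
  rewrite mem_iota => xy /=; rewrite count_map -(count_pred0 (enum_msets y.+1 m)).
  by apply: eq_count => t /=; lia.
rewrite [sumn (map _ (iota 0 x))](_ : _ = nmsets x m.+1); last first.
  rewrite -size_enum_msets /= size_flatten /shape -map_comp; congr sumn.
  apply/eq_in_map => y; rewrite mem_iota /= => yx.
  by rewrite count_map size_map -count_predT; apply: eq_count => t /=; rewrite yx.
rewrite (eq_count (a2 := ltlex^~ s)); last by move=> t /=; rewrite ltnn eqxx.
by case/and3P: (sP) => /eqP -> _ _; rewrite IH // addn0.
Qed.

Lemma card_ltlex_msets n k s : 0 < n -> is_mset n k s ->
  #|[set t : k.-tuple 'I_n | is_mset n k (map val t) && ltlex (map val t) s]| =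
  mset_rank s.
Proof.
move=> n_gt0 sP; rewrite cardsE cardE -(count_ltlex_enum_msets sP) -size_filter.
rewrite -(size_map (fun t : k.-tuple 'I_n => map val t)); apply/perm_size/uniq_perm.
- by rewrite map_inj_uniq ?enum_uniq // => t1 t2 /(inj_map val_inj)/val_inj.
- by rewrite filter_uniq ?uniq_enum_msets.
move=> x; rewrite mem_filter mem_enum_msets andbC.
apply/mapP/andP => [[t] | [xP xs]]; first by rewrite mem_enum => /andP[? ?] ->.
case/and3P: (xP) => /eqP xk _ /allP x_lt_n.
have xk' : size (map (insubd (Ordinal n_gt0)) x) == k by rewrite size_map xk.
have valK : map val (Tuple xk') = x.
  rewrite /= -map_comp -[RHS]map_id; apply/eq_in_map => y /x_lt_n y_lt_n /=.
  by rewrite insubdK.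
by exists (Tuple xk'); rewrite // mem_enum unfold_in /= valK xP.
Qed.

Definition greedy_digit (u m r x : nat) : Prop :=
  [/\ x < u, nmsets x m <= r & x.+1 = u \/ r < nmsets x.+1 m].

Lemma greedy_digit_rank u m r x : r < nmsets u m.+1 -> greedy_digit u m.+1 r x ->
  r - nmsets x m.+1 < nmsets x.+1 m.
Proof.
move=> r_lt [_ le_r [xu|r_lt']]; have := nmsetsS x m; last by lia.
by rewrite -xu in r_lt; lia.
Qed.

Section Reachability.

Variable P : seq instr.

Definition reach (c : config) (B : nat) (Q : config -> Prop) : Prop :=
  exists t, t <= B /\ Q (run P t c).

Lemma reach_now c B (Q : config -> Prop) : Q c -> reach c B Q.
Proof. by exists 0. Qed.

Lemma reach_step c B Q : reach (step P c) B Q -> reach c B.+1 Q.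
Proof. by case=> t [tB Qc]; exists t.+1; rewrite /run iterSr. Qed.

Lemma reach_le B B' c Q : B <= B' -> reach c B Q -> reach c B' Q.
Proof. by move=> BB' [t [tB Qc]]; exists t; rewrite (leq_trans tB). Qed.

Lemma reach_mono c B (Q1 Q2 : config -> Prop) :
  (forall c, Q1 c -> Q2 c) -> reach c B Q1 -> reach c B Q2.
Proof. by move=> Q12 [t [tB Qc]]; exists t; split; last apply: Q12. Qed.

Lemma reach_seq c B1 B2 Q1 Q : reach c B1 Q1 ->
  (forall c', Q1 c' -> reach c' B2 Q) -> reach c (B1 + B2) Q.
Proof.
move=> [t1 [t1B Q1c]] /(_ _ Q1c) [t2 [t2B Qc]]; exists (t1 + t2).
by rewrite leq_add //= /run addnC iterD.
Qed.

End Reachability.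

(* Registers: 15, 16, 24 hold the constants 1, 2, 0; 11 = u (current bound),
   12 = number of elements still to output, 13 = remaining rank r,
   14 = output pointer; the binary search keeps lo in 17, hi in 18 and
   nmsets lo in 19, the probe in 20, the binomial being built in 21 with its
   counter in 22, and 23 is scratch.  The result is written from cell
   100 + k upwards, away from the registers, and copied down to cells
   3 .. k + 2 at the end. *)
Definition prog : seq instr := [::
 IConst 15 1; IConst 16 2; IConst 24 0; IAdd 11 0 24; IAdd 12 1 24; IAdd 13 2 24;
 IConst 14 100; IAdd 14 14 1;
 (* 8 *) IJeq 12 24 37; IConst 17 0; IAdd 18 11 24; IConst 19 0;
 (* 12 *) IAdd 23 17 15; IJeq 23 18 31; IAdd 20 17 18; IDiv 20 20 16; IConst 21 1; IConst 22 0;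
 (* 18 *) IJeq 22 12 25; IAdd 22 22 15; IAdd 23 20 22; ISub 23 23 15; IMul 21 21 23; IDiv 21 21 22; IJmp 18;
 (* 25 *) IJlt 13 21 29; IAdd 17 20 24; IAdd 19 21 24; IJmp 12;
 (* 29 *) IAdd 18 20 24; IJmp 12;
 (* 31 *) IStore 14 17; ISub 13 13 19; IAdd 11 17 15; ISub 12 12 15; IAdd 14 14 15; IJmp 8;
 (* 37 *) IAdd 0 1 24; IConst 2 2; IAdd 0 0 2; IConst 2 97; IAdd 1 1 2; IAdd 1 1 0;
 (* 43 *) IConst 2 3; IJlt 0 2 51; ILoad 2 1; IStore 0 2; IConst 2 1; ISub 0 0 2; ISub 1 1 2; IJmp 43;
 (* 51 *) IHalt].

Ltac exec := apply: reach_step; rewrite /step /fetch /= ?/upd /=.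

Ltac drop_tests :=
  repeat (rewrite [_ == _](_ : _ = false); last by apply/negbTE/eqP; lia).

Ltac frame :=
  let y := fresh "y" in let yS := fresh "yS" in
  move=> y yS /=; rewrite ?inE in yS; drop_tests.

Ltac frame_with fr :=
  let y := fresh "y" in let yS := fresh "yS" in
  move=> y yS /=; rewrite ?inE in yS; drop_tests;
  rewrite fr /=; [drop_tests | rewrite ?inE; lia].

Lemma binomial_loop u mm : forall d s (m : Defs.mem), s + d = mm ->
  m 12 = mm -> m 15 = 1 -> m 20 = u -> m 22 = s -> m 21 = nmsets u s ->
  reach prog (18, m) (7 * d).+1 (fun c => [/\ c.1 = 25, c.2 21 = nmsets u mm &
    forall y, y \notin [:: 21; 22; 23] -> c.2 y = m y]).
Proof.
elim=> [|d IH] s m sd m12 m15 m20 m22 m21.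
  rewrite addn0 in sd; exec; rewrite m22 m12 sd eqxx.
  by apply: reach_now; split; rewrite /= ?m21 ?sd.
apply: (@reach_le prog (7 + (7 * d).+1)); first lia.
exec; rewrite m22 m12 (_ : (s == mm) = false); last lia.
do 6 exec.
apply: reach_mono; last apply: (IH s.+1).
- by move=> c [-> -> fr]; split=> //; frame_with fr.
all: rewrite /= ?m12 ?m15 ?m20 ?m21 ?m22 //; try lia.
by rewrite nmsetsS_div addn1 addnS subn1.
Qed.

Lemma search_probe mm lo hi (m : Defs.mem) : lo.+1 < hi ->
  m 12 = mm -> m 15 = 1 -> m 16 = 2 -> m 17 = lo -> m 18 = hi ->
  reach prog (12, m) (6 + (7 * mm).+1) (fun c => [/\ c.1 = 25,
    c.2 20 = (lo + hi) %/ 2, c.2 21 = nmsets ((lo + hi) %/ 2) mm &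
    forall y, y \notin [:: 20; 21; 22; 23] -> c.2 y = m y]).
Proof.
move=> lohi m12 m15 m16 m17 m18.
exec; exec; rewrite m17 m15 m18 (_ : (lo + 1 == hi) = false); last lia.
do 4 exec.
apply: reach_mono; last apply: (@binomial_loop ((lo + hi) %/ 2) mm mm 0).
- move=> c [-> -> fr]; split=> //; first by rewrite fr /= ?m16 ?m17 ?m18.
  by frame_with fr.
all: by rewrite /= ?m12 ?m15 ?m16 ?m17 ?m18 ?nmsets0.
Qed.

Definition search_post u mm r (m : Defs.mem) (c : config) : Prop :=
  [/\ c.1 = 31, greedy_digit u mm r (c.2 17), c.2 19 = nmsets (c.2 17) mm &
   forall y, y \notin [:: 17; 18; 19; 20; 21; 22; 23] -> c.2 y = m y].

Lemma search_post_frame u mm r (m m' : Defs.mem) c :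
  (forall y, y \notin [:: 17; 18; 19; 20; 21; 22; 23] -> m' y = m y) ->
  search_post u mm r m' c -> search_post u mm r m c.
Proof. by move=> m'E [c1 dig c19 fr]; split=> // y yS; rewrite fr ?m'E. Qed.

Lemma search_exit u mm r lo (m : Defs.mem) : greedy_digit u mm r lo ->
  m 15 = 1 -> m 17 = lo -> m 18 = lo.+1 -> m 19 = nmsets lo mm ->
  reach prog (12, m) 2 (search_post u mm r m).
Proof.
move=> dig m15 m17 m18 m19; exec; exec; rewrite m17 m15 m18 addn1 eqxx.
by apply: reach_now; split; rewrite /= ?m17 ?m19 //; frame.
Qed.

Lemma binary_search u mm r : forall e lo hi (m : Defs.mem),
  hi - lo <= 2 ^ e -> lo < hi <= u -> nmsets lo mm <= r ->
  hi = u \/ r < nmsets hi mm ->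
  m 12 = mm -> m 13 = r -> m 15 = 1 -> m 16 = 2 -> m 24 = 0 ->
  m 17 = lo -> m 18 = hi -> m 19 = nmsets lo mm ->
  reach prog (12, m) (e * (7 * mm + 11) + 2) (search_post u mm r m).
Proof.
elim=> [|e IH] lo hi m hilo /andP[lohi hiu] lo_r hi_r m12 m13 m15 m16 m24 m17 m18 m19.
  have hiE : hi = lo.+1 by rewrite expn0 in hilo; lia.
  by apply: (@search_exit u mm r lo) => //; [split; rewrite -?hiE | rewrite m18 hiE].
have [hiE | hi_lo] := eqVneq hi lo.+1.
  apply: (@reach_le prog 2); first lia.
  by apply: (@search_exit u mm r lo) => //; [split; rewrite -?hiE | rewrite m18 hiE].
set mid := (lo + hi) %/ 2.
have [lo_mid mid_hi] : lo < mid /\ mid < hi by rewrite /mid; lia.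
have [mid_lo hi_mid] : mid - lo <= 2 ^ e /\ hi - mid <= 2 ^ e.
  by rewrite expnS in hilo; rewrite /mid; lia.
apply: (@reach_le prog ((6 + (7 * mm).+1) + (4 + (e * (7 * mm + 11) + 2)))).
  by rewrite mulSn; lia.
apply: reach_seq; first by apply: (@search_probe mm lo hi m) => //; lia.
move=> [pc m1] /= [-> m1_20 m1_21 fr].
have [r_mid | mid_r] := ltnP r (nmsets mid mm).
{ exec; rewrite fr // m13 m1_21 r_mid; do 2 exec.
  apply: (@reach_le prog (e * (7 * mm + 11) + 2)) => //.
  apply: reach_mono; last apply: (IH lo mid).
  all: rewrite /= ?m1_20 ?fr //= ?m12 ?m13 ?m15 ?m16 ?m17 ?m19 ?m24 ?addn0 ?lo_mid //.
  - by move=> c; apply: search_post_frame; frame_with fr.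
  - lia.
  - by right. }
exec; rewrite fr // m13 m1_21 ltnNge mid_r; do 3 exec.
apply: reach_mono; last apply: (IH mid hi).
all: rewrite /= ?m1_20 ?m1_21 ?fr //= ?m12 ?m13 ?m15 ?m16 ?m18 ?m24 ?addn0 //.
- by move=> c; apply: search_post_frame; frame_with fr.
- lia.
Qed.

Lemma choose_digit e u mm r (m : Defs.mem) : u <= 2 ^ e -> r < nmsets u mm.+1 ->
  m 11 = u -> m 12 = mm.+1 -> m 13 = r -> m 15 = 1 -> m 16 = 2 -> m 24 = 0 ->
  reach prog (8, m) (4 + (e * (7 * mm.+1 + 11) + 2)) (search_post u mm.+1 r m).
Proof.
move=> u_le r_lt m11 m12 m13 m15 m16 m24.
have u_gt0 : 0 < u by case: u u_le r_lt {m11} => //; rewrite nmsets0n.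
exec; rewrite m12 m24; do 3 exec.
apply: reach_mono; last apply: (@binary_search u mm.+1 r e 0 u).
- by move=> c; apply: search_post_frame; frame.
all: rewrite /= ?m11 ?m12 ?m13 ?m15 ?m16 ?m24 ?nmsets0n ?subn0 ?addn0 ?u_gt0 ?leqnn //.
by left.
Qed.

Definition regs : seq nat := [:: 11; 12; 13; 14; 17; 18; 19; 20; 21; 22; 23].

Definition unrank_post A u mm r (m : Defs.mem) (c : config) : Prop :=
  [/\ c.1 = 37,
      exists o, [/\ is_mset u mm o, mset_rank o = r &
                    forall j, j < mm -> c.2 (A + j) = nth 0 o j]
    & forall y, y < A -> y \notin regs -> c.2 y = m y].

Lemma unrank_post_cons A u mm r x (m m' : Defs.mem) c : 24 < A ->
  greedy_digit u mm.+1 r x -> m' A = x ->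
  (forall y, y < A -> y \notin regs -> m' y = m y) ->
  unrank_post A.+1 x.+1 mm (r - nmsets x mm.+1) m' c -> unrank_post A u mm.+1 r m c.
Proof.
move=> A_gt [x_lt x_r _] m'A m'E [c1 [o [oP o_rank o_out]] fr]; split=> //.
  exists (x :: o); split; first by rewrite is_mset_cons x_lt.
    by case/and3P: oP => /eqP o_size _ _; rewrite /= o_size o_rank subnKC.
  case=> [|j] j_lt /=; first by rewrite addn0 fr ?m'A // !inE; lia.
  by rewrite -addSnnS o_out.
by move=> y y_lt yS; rewrite fr ?m'E //; lia.
Qed.

Lemma unrank_loop e K : forall mm u r A (m : Defs.mem),
  mm <= K -> u <= 2 ^ e -> r < nmsets u mm -> 24 < A ->
  m 11 = u -> m 12 = mm -> m 13 = r -> m 14 = A -> m 15 = 1 -> m 16 = 2 -> m 24 = 0 ->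
  reach prog (8, m) (mm * (e * (7 * K + 11) + 12)).+1 (unrank_post A u mm r m).
Proof.
set X := e * (7 * K + 11) + 12.
elim=> [|mm IH] u r A m mm_K u_le r_lt A_gt m11 m12 m13 m14 m15 m16 m24.
  exec; rewrite m12 m24 eqxx; apply: reach_now; split=> //.
  by exists [::]; split=> //=; rewrite nmsets0 in r_lt; lia.
apply: (@reach_le prog ((4 + (e * (7 * mm.+1 + 11) + 2)) + (6 + (mm * X).+1))).
  have : e * (7 * mm.+1 + 11) <= e * (7 * K + 11) by apply: leq_mul; lia.
  by rewrite /X mulSn; lia.
apply: reach_seq; first exact: (@choose_digit e u mm r).
move=> [pc m2] [/= -> dig m2_19 fr].
have m2A : m2 14 = A by rewrite fr ?m14.
apply: reach_step; rewrite /step /fetch /= m2A; set x := m2 17 in dig m2_19 *.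
have rest := greedy_digit_rank r_lt dig.
have m3A : upd m2 A x A = x by rewrite /upd eqxx.
have m3E : forall y, y < A -> upd m2 A x y = m2 y.
  by move=> y y_lt; rewrite /upd /=; case: eqP => // yA; lia.
move: (upd m2 A x) m3A m3E => m3 m3A m3E.
do 5 exec.
apply: reach_mono; last apply: (IH x.+1 (r - nmsets x mm.+1) A.+1).
- move=> c; apply: unrank_post_cons => //.
    by rewrite /=; drop_tests.
  move=> y y_lt yS /=; rewrite ?inE in yS.
  by drop_tests; rewrite m3E // fr ?inE //; lia.
all: rewrite /= ?m3E -/x ?m2_19 ?fr //= ?m11 ?m12 ?m13 ?m14 ?m15 ?m16 ?m24.
all: case: dig => *; lia.
Qed.

Definition copy_post K D (m0 : Defs.mem) (c : config) : Prop :=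
  halted prog c /\ forall j, j < K -> c.2 (3 + j) = m0 (3 + j + D).

Lemma copy_loop K D (m0 : Defs.mem) : K <= D -> forall d (m : Defs.mem), d <= K ->
  m 0 = d + 2 -> m 1 = d + 2 + D ->
  (forall y, 3 + D <= y -> m y = m0 y) ->
  (forall x, d + 2 < x <= K + 2 -> m x = m0 (x + D)) ->
  reach prog (43, m) (8 * d + 2) (copy_post K D m0).
Proof.
move=> KD; elim=> [|d IH] m d_K m0E m1E src dst.
  do 2 exec; rewrite m0E; apply: reach_now; split=> // j j_K /=.
  by drop_tests; rewrite dst //; lia.
apply: (@reach_le prog (8 + (8 * d + 2))); first lia.
do 2 exec; rewrite m0E (_ : d.+1 + 2 < 3 = false); last lia.
do 6 exec; rewrite m0E m1E.
apply: IH => /=; first lia.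
- by drop_tests; lia.
- by drop_tests; lia.
- by move=> y yD; drop_tests; rewrite src.
move=> x xr; have [->|xd] := eqVneq x (d.+1 + 2).
  by drop_tests; rewrite src //; lia.
by drop_tests; rewrite dst //; lia.
Qed.

Lemma prog_unranks n k i : 0 < n -> i < 'C(n.-1 + k, k) ->
  let e := (trunc_log 2 n).+1 in
  reach prog (init n k i) (k * (e * (7 * k + 11) + 12) + 8 * k + 17)
    (fun c => halted prog c /\ mset_of_rank n k i (output k c)).
Proof.
move=> n_gt0 i_lt e.
have n_le : n <= 2 ^ e by apply/ltnW/trunc_log_ltn.
have i_lt' : i < nmsets n k by rewrite /nmsets (_ : n + k - 1 = n.-1 + k) //; lia.
apply: (@reach_le prog (8 + ((k * (e * (7 * k + 11) + 12)).+1 + (6 + (8 * k + 2))))).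
  by lia.
rewrite /init; do 8 exec.
apply: reach_seq.
  by apply: (@unrank_loop e k k n i (100 + k)) => //=; rewrite ?addn0 //; lia.
move=> [pc m2] [/= -> [o [oP o_rank o_out]] fr].
have [m2_1 m2_24] : m2 1 = k /\ m2 24 = 0 by rewrite !fr.
do 6 exec; rewrite m2_1 m2_24.
apply: reach_mono; last apply: (@copy_loop k (k + 97) m2 _ k).
- move=> c [halts copied]; split=> //.
  have -> : output k c = o.
    case/and3P: (oP) => /eqP o_size _ _.
    rewrite -[RHS](mkseq_nth 0) o_size /output /mkseq; apply/eq_in_map => j.
    by rewrite mem_iota => /= j_lt; rewrite copied // -o_out //; congr m2; lia.
  by split; rewrite // card_ltlex_msets.
all: rewrite /= ?addn0 //; try lia.
by frame.
Qed.

Lemma unrank_cost_le k e : 0 < e ->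
  k * (e * (7 * k + 11) + 12) + 8 * k + 17 <= 40 * (k ^ 2 * e).+1.
Proof.
move=> e_gt0; have k_sq : k <= k ^ 2 by case: k => // k; rewrite expnS expn1 leq_pmulr.
have := leq_mul k_sq (leqnn e); have := leq_trans k_sq (leq_pmulr _ e_gt0).
have -> : k * (e * (7 * k + 11) + 12) = 7 * (k ^ 2 * e) + 11 * (k * e) + 12 * k.
  by rewrite expnS expn1; nia.
lia.
Qed.

Theorem lemma3p3 :
  exists (P : seq instr) (C : nat),
    forall n k i : nat, 0 < n -> i < 'C(n.-1 + k, k) ->
      exists t : nat,
        t <= C * (k ^ 2 * (trunc_log 2 n).+1).+1 /\
        halted P (run P t (init n k i)) /\
        mset_of_rank n k i (output k (run P t (init n k i))).
Proof.
exists prog, 40 => n k i n_gt0 i_lt.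
have [t [t_le [halts ranked]]] := prog_unranks n_gt0 i_lt.
by exists t; split=> //; apply: leq_trans t_le (unrank_cost_le _ _).
Qed.
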